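(* Let $n\ge1$ and let $F$ be an o-polynomial over $\mathbb{F}_{2^n}$. Then for every $b\in\mathbb{F}_{2^n}^*$, $$\sum_{v\in\mathbb{F}_{2^n}} W_F^2(bv,v)=2^{2n+1}.$$
   Context: $tr_n$ denotes the absolute trace from $\mathbb{F}_{2^n}$ to $\mathbb{F}_2$, $\mathbb{F}_{2^n}^*=\mathbb{F}_{2^n}\setminus\{0\}$, and $W_F(u,v)=\sum_{x\in\mathbb{F}_{2^n}}(-1)^{tr_n(vF(x))+tr_n(ux)}$. In $PG(2,2^n)$, a hyperoval is a set of $2^n+2$ points no three of which lie on a common line. A function (polynomial) $F$ over $\mathbb{F}_{2^n}$ is an o-polynomial if $\{(1,t,F(t)) : t\in\mathbb{F}_{2^n}\}\cup\{(0,1,0),(0,0,1)\}$ is a hyperoval of $PG(2,2^n)$. Equivalently (known fact), $F$ is an o-polynomial iff $F$ is a permutation and, for each $s\in\mathbb{F}_{2^n}$, the map $F_s$ defined by $F_s(t)=(F(t+s)+F(s))/t$ for $t\ne0$ and $F_s(0)=0$ is a permutation of $\mathbb{F}_{2^n}$. *)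

From HB Require Import structures.
From mathcomp Require Import all_boot all_order all_algebra all_field.
Set Implicit Arguments. Unset Strict Implicit. Unset Printing Implicit Defensive.
Import Order.TTheory GRing.Theory Num.Theory.
Local Open Scope ring_scope.

(* Absolute trace tr_n : F_{2^n} -> F_2, with F_2 viewed inside K as {0,1}. *)
Definition trn (K : finFieldType) (n : nat) (x : K) : K :=
  \sum_(i < n) x ^+ (2 ^ i).

(* (-1)^a for a in F_2 (represented as 0 or 1 in K), valued in int. *)
Definition sgn (K : finFieldType) (a : K) : int := if a == 0 then 1 else -1.

Definition walsh (K : finFieldType) (n : nat) (F : K -> K) (u v : K) : int :=
  \sum_(x : K) sgn (trn n (v * F x) + trn n (u * x)).

(* Homogeneous coordinates of the points of
   {(1,t,F t) : t in K} ∪ {(0,1,0),(0,0,1)}, indexed by option (option K). *)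
Definition opt_point (K : finFieldType) (F : K -> K) (i : option (option K))
  : K * K * K :=
  match i with
  | None => (0, 1, 0)
  | Some None => (0, 0, 1)
  | Some (Some t) => (1, t, F t)
  end.

Definition on_line (K : finFieldType) (l p : K * K * K) : Prop :=
  l.1.1 * p.1.1 + l.1.2 * p.1.2 + l.2 * p.2 = 0.

Definition collinear (K : finFieldType) (p q r : K * K * K) : Prop :=
  exists l : K * K * K, l <> (0, 0, 0) /\ on_line l p /\ on_line l q /\ on_line l r.

(* F is an o-polynomial: the 2^n+2 (pairwise distinct) points above form a
   hyperoval, i.e. no three of them lie on a common line. *)
Definition o_polynomial (K : finFieldType) (F : K -> K) : Prop :=
  forall i j k : option (option K), i <> j -> j <> k -> i <> k ->
    ~ collinear (opt_point F i) (opt_point F j) (opt_point F k).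

(* Writing G x := F x + b x, the Walsh coefficient W_F(b v, v) is the
   character sum of G at v, so by orthogonality of the additive characters
   x |-> (-1)^{tr(v x)} the sum of their squares is 2^n times the number of
   pairs (x, y) with G x = G y.  For y <> x, G x = G y says that the secant
   through (x, F x) and (y, F y) has slope b (we are in characteristic 2).
   Since no three points of the hyperoval are collinear, the secants through
   a fixed point of the graph have pairwise distinct nonzero slopes, i.e.
   every nonzero slope occurs exactly once: each fibre of G has 2 elements. *)

From HB Require Import structures.
From mathcomp Require Import all_boot all_order all_algebra all_field.
From mathcomp Require Import ring zify.
Import Order.TTheory GRing.Theory Num.Theory.
Local Open Scope ring_scope.
Set Implicit Arguments. Unset Strict Implicit.

Section AbsoluteTrace.

Variables (K : finFieldType) (n : nat).
Hypothesis cardK : #|K| = (2 ^ n)%N.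

Lemma pchar2_finField : 2 \in [pchar K].
Proof. exact: card_finPcharP cardK _. Qed.

Lemma exponent_gt0 : (0 < n)%N.
Proof. by case: n cardK => // /esym; rewrite (cardD1 0) (cardD1 1) !inE oner_eq0. Qed.

Lemma exprD_pow2 (x y : K) i : (x + y) ^+ (2 ^ i) = x ^+ (2 ^ i) + y ^+ (2 ^ i).
Proof.
by apply: exprDn_pchar; rewrite pnatX (eq_pnat _ (pcharf_eq pchar2_finField)) pnat_id.
Qed.

Lemma trnD (x y : K) : trn n (x + y) = trn n x + trn n y.
Proof. by rewrite /trn -big_split; apply: eq_bigr => i _; rewrite exprD_pow2. Qed.

Lemma trn0 : trn n (0 : K) = 0.
Proof. by rewrite /trn big1 // => i _; rewrite expr0n expn_eq0. Qed.

Lemma trn_sqr (x : K) : trn n x ^+ 2 = trn n x.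
Proof.
rewrite -(pFrobenius_autE pchar2_finField) rmorph_sum /=.
under eq_bigr do rewrite pFrobenius_autE -exprM -expnSr.
have x_pow_card : x ^+ (2 ^ n) = x by rewrite -cardK expf_card.
case: n exponent_gt0 x_pow_card => // m _ x_pow_card.
by rewrite big_ord_recr /trn big_ord_recl /= x_pow_card addrC expr1.
Qed.

Lemma trn_01 (x : K) : (trn n x == 0) || (trn n x == 1).
Proof.
have : trn n x * (trn n x - 1) == 0 by rewrite mulrBr mulr1 -expr2 trn_sqr subrr.
by rewrite mulf_eq0 subr_eq0.
Qed.

Lemma exists_trn_eq1 : exists w : K, trn n w = 1.
Proof.
have [w trw_neq0 | trn_eq0] := pickP (fun w : K => trn n w != 0).
  by exists w; move: (trn_01 w); rewrite (negPf trw_neq0) => /eqP.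
exfalso.
pose p : {poly K} := \sum_(i < n) 'X^(2 ^ i).
have p_neq0 : p != 0.
  apply/eqP => /(congr1 (fun q : {poly K} => q`_1)); apply/eqP.
  rewrite coef0 coef_sum (bigD1 (Ordinal exponent_gt0)) //= coefXn eqxx big1.
    by rewrite addr0 oner_eq0.
  move=> i /eqP i_neq0; rewrite coefXn -(expn0 2) eqn_exp2l //.
  by case: eqP => // i0; case: i_neq0; apply: val_inj.
have p_roots : all (root p) (enum K).
  apply/allP => w _; rewrite /root horner_sum.
  by under eq_bigr do rewrite hornerXn; apply/negbFE/trn_eq0.
have size_p : (size p <= (2 ^ n.-1).+1)%N.
  apply: leq_trans (size_sum _ _ _) _; apply/bigmax_leqP => i _.
  by rewrite size_polyXn ltnS leq_exp2l // -ltnS prednK // exponent_gt0.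
have := max_poly_roots p_neq0 p_roots (enum_uniq K).
rewrite -cardE cardK; move: size_p; case: (n) exponent_gt0 => // m _ /=.
rewrite expnS; move: (size p) (expn_gt0 2 m) => s; lia.
Qed.

Lemma sgn_trnD (x y : K) : sgn (trn n (x + y)) = sgn (trn n x) * sgn (trn n y).
Proof.
have one_add_one : (1 : K) + 1 = 0 by rewrite (addrr_pchar2 pchar2_finField).
rewrite trnD /sgn; move: (trn_01 x) (trn_01 y).
by move=> /orP[] /eqP -> /orP[] /eqP ->;
  rewrite ?addr0 ?add0r ?one_add_one ?eqxx ?oner_eq0.
Qed.

Lemma sum_sgn_trn (a : K) :
  \sum_(v : K) sgn (trn n (v * a)) = if a == 0 then (2 ^ n)%:Z else 0.
Proof.
have [-> | a_neq0] := eqVneq a 0.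
  under eq_bigr do rewrite mulr0 trn0 /sgn eqxx.
  by rewrite sumr_const cardT -cardE cardK natz.
have [w trw1] := exists_trn_eq1.
set S := \sum_v _.
suff : S = - S by lia.
rewrite {1}/S (reindex_inj (addrI (w / a))) -sumrN; apply: eq_bigr => v _.
by rewrite mulrDl divfK // sgn_trnD trw1 /sgn oner_eq0 mulN1r.
Qed.

Lemma sum_sqr_sum_sgn_trn (G : K -> K) :
  \sum_(v : K) (\sum_(x : K) sgn (trn n (v * G x))) ^+ 2
  = (2 ^ n * \sum_(x : K) #|[pred y | G x == G y]|)%N%:Z.
Proof.
have sqr_sum v : (\sum_x sgn (trn n (v * G x))) ^+ 2
    = \sum_x \sum_y sgn (trn n (v * (G x + G y))).
  rewrite expr2 mulr_suml; apply: eq_bigr => x _.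
  by rewrite mulr_sumr; apply: eq_bigr => y _; rewrite mulrDr sgn_trnD.
under eq_bigr do rewrite sqr_sum.
rewrite exchange_big; under eq_bigr do rewrite exchange_big.
under eq_bigr do under eq_bigr do
  rewrite sum_sgn_trn addr_eq0 (oppr_pchar2 pchar2_finField).
under eq_bigr do rewrite -big_mkcond sumr_const.
rewrite -[RHS]natz natrM natr_sum mulr_sumr; apply: eq_bigr => x _.
by rewrite mulr_natr natz.
Qed.

End AbsoluteTrace.

Section Hyperoval.

Variables (K : finFieldType) (F : K -> K).
Hypothesis hF : o_polynomial F.

Definition slope (x y : K) : K := (F y - F x) / (y - x).

(* The line [X2 = F x X0 + s (X1 - x X0)] through [(1, x, F x)] with slope [s]. *)
Definition secant (x s : K) : K * K * K := (s * x - F x, - s, 1).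

Lemma secant_neq0 x s : secant x s <> (0, 0, 0).
Proof. by case=> _ _ /eqP; rewrite oner_eq0. Qed.

Lemma on_secant x s t : F t - F x = s * (t - x) ->
  on_line (secant x s) (opt_point F (Some (Some t))).
Proof.
move=> Ft; rewrite /on_line /=.
have -> : (s * x - F x) * 1 + - s * t + 1 * F t = (F t - F x) - s * (t - x) by ring.
by rewrite Ft subrr.
Qed.

Lemma slope_eqE x y c : y != x -> (slope x y == c) = (F y - F x == c * (y - x)).
Proof.
rewrite -subr_eq0 => yx_neq0.
by apply/eqP/eqP => [<- | Fyx]; rewrite /slope ?divfK // Fyx mulfK.
Qed.

Lemma slopeP x y : y != x -> F y - F x = slope x y * (y - x).
Proof. by move=> yx; apply/eqP; rewrite -slope_eqE. Qed.

Let point_neq (x y : K) : x != y ->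
  Some (Some x) <> Some (Some y) :> option (option K).
Proof. by move=> /eqP xy [/xy]. Qed.

Lemma slope_neq0 x y : y != x -> slope x y != 0.
Proof.
move=> yx; apply/eqP => slope0.
apply: (hF (i := Some (Some x)) (j := Some (Some y)) (k := None)) => //.
  by apply: point_neq; rewrite eq_sym.
exists (secant x 0); split; first exact: secant_neq0.
split; first by apply: on_secant; rewrite !subrr mulr0.
split; first by apply: on_secant; rewrite slopeP // slope0.
by rewrite /on_line /= oppr0 mulr0 mul0r mulr0 !addr0.
Qed.

Lemma slope_inj x : {in [set~ x] &, injective (slope x)}.
Proof.
move=> y z; rewrite !in_setC1 => yx zx slope_yz; apply/eqP/negPn/negP => yz.
apply: (hF (i := Some (Some x)) (j := Some (Some y)) (k := Some (Some z))).
- by apply: point_neq; rewrite eq_sym.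
- exact: point_neq.
- by apply: point_neq; rewrite eq_sym.
exists (secant x (slope x y)); split; first exact: secant_neq0.
split; first by apply: on_secant; rewrite !subrr mulr0.
split; first by apply: on_secant; rewrite slopeP.
by apply: on_secant; rewrite slope_yz slopeP.
Qed.

Lemma slope_onto x c : c != 0 -> exists2 y, y != x & slope x y = c.
Proof.
move=> c_neq0.
have slope_sub : slope x @: [set~ x] \subset [set~ 0].
  by apply/subsetP => s /imsetP[y]; rewrite !in_setC1 => yx ->; apply: slope_neq0.
have card_slope : #|slope x @: [set~ x]| = #|[set~ (0 : K)]|.
  by rewrite card_in_imset ?cardsC1 //; exact: slope_inj.
have : c \in slope x @: [set~ x] by rewrite (subset_cardP card_slope slope_sub) in_setC1.
by case/imsetP => y; rewrite in_setC1 => yx ->; exists y.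
Qed.

Lemma card_secant_points x c : c != 0 ->
  #|[pred y | F y - F x == c * (y - x)]| = 2%N.
Proof.
move=> /(slope_onto x)[y0 y0x slope_y0].
rewrite -(_ : #|[set x; y0]| = 2%N); last by rewrite cards2 eq_sym y0x.
apply: eq_card => y; rewrite !inE.
have [-> | yx] := eqVneq y x; first by rewrite !subrr mulr0 eqxx.
rewrite -slope_eqE // -slope_y0.
apply/eqP/eqP => [/(slope_inj _ _) -> // | -> //]; by rewrite in_setC1.
Qed.

End Hyperoval.

Theorem mainTheorem6 (K : finFieldType) (n : nat) (hn : (1 <= n)%N)
  (hK : #|K| = (2 ^ n)%N) (F : K -> K) (hF : o_polynomial F)
  (b : K) (hb : b != 0) :
  \sum_(v : K) (walsh n F (b * v) v) ^+ 2 = (2 ^ (2 * n + 1))%:Z.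
Proof.
pose G t := F t + b * t.
have walshE v : walsh n F (b * v) v = \sum_(x : K) sgn (trn n (v * G x)).
  apply: eq_bigr => x _; rewrite -(trnD hK) /G; congr (sgn (trn n _)); ring.
have fiber_G x : #|[pred y | G x == G y]| = 2%N.
  have nb_neq0 : - b != 0 by rewrite oppr_eq0.
  rewrite -(card_secant_points hF x nb_neq0); apply: eq_card => y /=.
  by rewrite !inE eq_sym -subr_eq0 -[RHS]subr_eq0; congr (_ == 0); rewrite /G; ring.
under eq_bigr do rewrite walshE.
rewrite (sum_sqr_sum_sgn_trn hK); under eq_bigr do rewrite fiber_G.
by rewrite sum_nat_const cardT -cardE hK mulnA -expnD addnn -mul2n expnD expn1.
Qed.
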